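(* Let $A$ be a two-dimensional evolution algebra over a field $\mathbb{K}$ with $\dim(A^2)=1$, $A^3\neq0$ and $(A^2)^2=0$. Then there is a natural basis $\{e,f\}$ of $A$ with $e^2=e-f$ and $f^2=-e+f$. The square of $A$ is $\mathfrak{D}_5$, and $A$ is not alternative.
   Context: An evolution algebra over $\mathbb{K}$ is a $\mathbb{K}$-algebra with a basis $\{e_i\}$ (natural basis) such that $e_ie_j=0$ for $i\neq j$. $A^2$ is the span of $\{xy: x,y\in A\}$, $A^3$ the span of $\{xy: x\in A,y\in A^2\}$, $(A^2)^2$ the span of $\{xy:x,y\in A^2\}$. For a natural basis $\{e_1,e_2\}$ with $e_1^2=\omega_{11}e_1+\omega_{21}e_2$, $e_2^2=\omega_{12}e_1+\omega_{22}e_2$, its pseudo-square is $\{L,T,R,D\}$-subset with $L,T,R,D$ present iff $\omega_{11},\omega_{12},\omega_{22},\omega_{21}$ respectively are nonzero; the square of $A$ is the set of pseudo-squares of all natural bases; $\mathfrak{D}_5=\{\{L,T,R,D\}\}$. $A$ is alternative if $x^2y=x(xy)$ and $yx^2=(yx)x$ for all $x,y\in A$. *)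

From HB Require Import structures.
From mathcomp Require Import all_boot all_order all_algebra.
Set Implicit Arguments. Unset Strict Implicit. Unset Printing Implicit Defensive.
Import GRing.Theory.
Local Open Scope ring_scope.

Inductive Letter := LL | TT | RR | DD.

Definition letter_to (l : Letter) : 'I_4 :=
  match l with LL => inord 0 | TT => inord 1 | RR => inord 2 | DD => inord 3 end.
Definition letter_of (i : 'I_4) : Letter :=
  match val i with 0 => LL | 1 => TT | 2 => RR | _ => DD end.
Lemma letterK : cancel letter_to letter_of.
Proof. by case; rewrite /letter_of /= inordK. Qed.
HB.instance Definition _ := Finite.copy Letter (can_type letterK).

Section EvolutionAlgebra.
Variables (K : fieldType) (A : vectType K) (mul : A -> A -> A).

Definition bilinear_mul : Prop :=
  (forall (a : K) (x y z : A), mul (a *: x + y) z = a *: mul x z + mul y z) /\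
  (forall (a : K) (x y z : A), mul z (a *: x + y) = a *: mul z x + mul z y).

Definition natural_basis2 (e1 e2 : A) : Prop :=
  basis_of fullv [:: e1; e2] /\ mul e1 e2 = 0 /\ mul e2 e1 = 0.

Definition evolution_algebra2 : Prop :=
  exists e1 e2, natural_basis2 e1 e2.

Definition in_span (S : A -> Prop) (v : A) : Prop :=
  exists s : seq A, (forall x, x \in s -> S x) /\ v \in <<s>>%VS.

Definition A2 (v : A) : Prop := in_span (fun w => exists x y, w = mul x y) v.
Definition A3 (v : A) : Prop :=
  in_span (fun w => exists x y, A2 y /\ w = mul x y) v.
Definition A2sq (v : A) : Prop :=
  in_span (fun w => exists x y, A2 x /\ A2 y /\ w = mul x y) v.

Definition is_subspace_set (P : A -> Prop) (U : {vspace A}) : Prop :=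
  forall v, v \in U <-> P v.

(* pseudo-square of the natural basis {e1, e2}:
   e1^2 = w11 e1 + w21 e2, e2^2 = w12 e1 + w22 e2;
   L iff w11 <> 0, T iff w12 <> 0, R iff w22 <> 0, D iff w21 <> 0 *)
Definition pseudo_square (e1 e2 : A) : {set Letter} :=
  let X := [tuple e1; e2] in
  let w11 := coord X (inord 0) (mul e1 e1) in
  let w21 := coord X (inord 1) (mul e1 e1) in
  let w12 := coord X (inord 0) (mul e2 e2) in
  let w22 := coord X (inord 1) (mul e2 e2) in
  [set l | match l with
           | LL => w11 != 0 | TT => w12 != 0
           | RR => w22 != 0 | DD => w21 != 0 end].

Definition in_square (P : {set Letter}) : Prop :=
  exists e1 e2, natural_basis2 e1 e2 /\ pseudo_square e1 e2 = P.

Definition D5 : {set {set Letter}} := [set [set LL; TT; RR; DD]].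

Definition square_is (F : {set {set Letter}}) : Prop :=
  forall P, in_square P <-> P \in F.

Definition alternative : Prop :=
  forall x y : A, mul (mul x x) y = mul x (mul x y) /\
                  mul y (mul x x) = mul (mul y x) x.

End EvolutionAlgebra.

From HB Require Import structures.
From mathcomp Require Import all_boot all_order all_algebra ring.
(* For a natural basis {g, h}, the line A^2 is spanned by some w = x g + y h,
   so g^2 = a w and h^2 = b w.  Then w^2 = (a x^2 + b y^2) w, so (A^2)^2 = 0
   forces a x^2 + b y^2 = 0, while A^3 = span (x a w, y b w) <> 0 makes x a or
   y b nonzero; together these make a, b, x, y all nonzero.  Hence every
   natural basis has full pseudo-square, (g^2) h = a y b w <> 0 = g (g h)
   breaks alternativity, and rescaling g and h gives the normal form. *)

Set Implicit Arguments. Unset Strict Implicit. Unset Printing Implicit Defensive.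
Import GRing.Theory.
Local Open Scope ring_scope.

Lemma vlineZ (K : fieldType) (V : vectType K) (k : K) (v : V) :
  k != 0 -> (<[k *: v]> = <[v]>)%VS.
Proof.
move=> k0; apply/eqP; rewrite eqEsubv -!memvE; apply/andP; split; apply/vlineP.
  by exists k.
by exists k^-1; rewrite scalerA mulVf ?scale1r.
Qed.

Lemma dimv1_line (K : fieldType) (V : vectType K) (U : {vspace V}) :
  \dim U = 1%N -> exists2 w, w != 0 & U = <[w]>%VS.
Proof.
move=> dimU; have w0 : vpick U != 0 by rewrite vpick0 -dimv_eq0 dimU.
exists (vpick U) => //; apply/esym/eqP.
by rewrite eqEdim dim_vline w0 dimU andbT -memvE memv_pick.
Qed.

Lemma basis_pair_decomp (K : fieldType) (V : vectType K) (g h v : V) :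
  basis_of fullv [:: g; h] -> exists c d, v = c *: g + d *: h.
Proof.
move=> B; have : v \in <<[tuple g; h]>>%VS by rewrite /= (span_basis B) memvf.
by move/coord_span => ->; rewrite !big_ord_recr big_ord0 /= add0r; do 2 eexists.
Qed.

Lemma coord_pair (K : fieldType) (V : vectType K) (g h : V) (c d : K) :
  free [:: g; h] ->
  coord [tuple g; h] (inord 0) (c *: g + d *: h) = c /\
  coord [tuple g; h] (inord 1) (c *: g + d *: h) = d.
Proof.
move=> fr; rewrite !linearD !linearZ /=.
have -> : (inord 0 : 'I_2) = ord0 by apply/val_inj; rewrite /= inordK.
have -> : (inord 1 : 'I_2) = ord_max by apply/val_inj; rewrite /= inordK.
have coordE i j := @coord_free _ _ 2 [tuple g; h] i j fr.
rewrite (coordE ord0 ord0) (coordE ord0 ord_max).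
rewrite (coordE ord_max ord0) (coordE ord_max ord_max) /=.
by rewrite !mulr1 !mulr0 addr0 add0r.
Qed.

Lemma isotropic_diag2_neq0 (K : fieldType) (a b x y : K) :
  a * x ^+ 2 + b * y ^+ 2 = 0 -> (x * a != 0) || (y * b != 0) ->
  [&& a != 0, b != 0, x != 0 & y != 0].
Proof.
wlog xa : a b x y / x * a != 0 => [hw E /orP[xa|yb] | E _].
- by apply: hw => //; rewrite xa.
- by have := hw b a y x yb; rewrite addrC yb => /(_ E isT) /and4P[-> -> -> ->].
have [x0 a0] : x != 0 /\ a != 0 by apply/andP; rewrite -negb_or -mulf_eq0.
have byE : b * y ^+ 2 = - (a * x ^+ 2) by apply/eqP; rewrite -addr_eq0 addrC E.
move: (mulf_neq0 a0 (expf_neq0 2 x0)); rewrite -oppr_eq0 -byE mulf_eq0 sqrf_eq0.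
by rewrite negb_or => /andP[b0 y0]; rewrite a0 b0 x0 y0.
Qed.

Lemma in_span_eq0 (K : fieldType) (V : vectType K) (S : V -> Prop) (v : V) :
  (forall x, S x -> x = 0) -> in_span S v -> v = 0.
Proof.
move=> S0 [s [sS sv]]; apply/eqP; rewrite -memv0.
by apply: subvP sv; apply/span_subvP => x /sS/S0 ->; rewrite mem0v.
Qed.

Section Products.
Variables (K : fieldType) (A : vectType K) (mul : A -> A -> A).

Lemma A2_mul x y : A2 mul (mul x y).
Proof.
exists [:: mul x y]; split; last exact: memv_span1.
by move=> z; rewrite inE => /eqP ->; exists x, y.
Qed.

Lemma A2sq_mul x y : A2 mul x -> A2 mul y -> A2sq mul (mul x y).
Proof.
move=> Ax Ay; exists [:: mul x y]; split; last exact: memv_span1.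
by move=> z; rewrite inE => /eqP ->; exists x, y.
Qed.

Lemma pseudo_square_full g h p q r s :
  free [:: g; h] -> [&& p != 0, q != 0, r != 0 & s != 0] ->
  mul g g = p *: g + q *: h -> mul h h = r *: g + s *: h ->
  pseudo_square mul g h = [set LL; TT; RR; DD].
Proof.
move=> fr /and4P[p0 q0 r0 s0] gg hh.
apply/setP => l; rewrite /pseudo_square gg hh.
have [-> ->] := coord_pair p q fr; have [-> ->] := coord_pair r s fr.
by case: l; rewrite !inE ?p0 ?q0 ?r0 ?s0 eqxx ?orbT.
Qed.

End Products.

Section Bilinear.
Variables (K : fieldType) (A : vectType K) (mul : A -> A -> A).
Hypothesis mul_bilinear : bilinear_mul mul.

Lemma bmulDl x y z : mul (x + y) z = mul x z + mul y z.
Proof. by have := mul_bilinear.1 1 x y z; rewrite !scale1r. Qed.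

Lemma bmulDr x y z : mul z (x + y) = mul z x + mul z y.
Proof. by have := mul_bilinear.2 1 x y z; rewrite !scale1r. Qed.

Lemma bmul0r z : mul z 0 = 0.
Proof. by apply: (@addrI _ (mul z 0)); rewrite -bmulDr !addr0. Qed.

Lemma bmul0l z : mul 0 z = 0.
Proof. by apply: (@addrI _ (mul 0 z)); rewrite -bmulDl !addr0. Qed.

Lemma bmulZl a x z : mul (a *: x) z = a *: mul x z.
Proof. by have := mul_bilinear.1 a x 0 z; rewrite !addr0 bmul0l addr0. Qed.

Lemma bmulZr a x z : mul z (a *: x) = a *: mul z x.
Proof. by have := mul_bilinear.2 a x 0 z; rewrite !addr0 bmul0r addr0. Qed.

Lemma bmul_natural2 g h c d c' d' : mul g h = 0 -> mul h g = 0 ->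
  mul (c *: g + d *: h) (c' *: g + d' *: h) =
  (c * c') *: mul g g + (d * d') *: mul h h.
Proof.
move=> gh hg; rewrite !(bmulDl, bmulDr, bmulZl, bmulZr) gh hg.
by rewrite !scaler0 addr0 add0r !scalerA.
Qed.

Lemma natural_basis2Z g h l m : natural_basis2 mul g h -> l != 0 -> m != 0 ->
  natural_basis2 mul (l *: g) (m *: h).
Proof.
move=> [B [gh hg]] l0 m0; split; last by rewrite !(bmulZl, bmulZr) gh hg !scaler0.
by move: B; rewrite !basisEdim !span_cons !vlineZ.
Qed.

Lemma not_alternative_of_sqr_mul g h :
  mul g h = 0 -> mul (mul g g) h != 0 -> ~ alternative mul.
Proof. by move=> gh ggh /(_ g h)[alt _]; rewrite alt gh bmul0r eqxx in ggh. Qed.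

Lemma natural_basis2_normalize g h a b x y :
  natural_basis2 mul g h -> [&& a != 0, b != 0, x != 0 & y != 0] ->
  a * x ^+ 2 + b * y ^+ 2 = 0 ->
  mul g g = a *: (x *: g + y *: h) -> mul h h = b *: (x *: g + y *: h) ->
  exists e f, natural_basis2 mul e f /\ mul e e = e - f /\ mul f f = - e + f.
Proof.
move=> NB /and4P[a0 b0 x0 y0] E gg hh.
have bE : b = - a * x ^+ 2 / y ^+ 2.
  apply: (mulIf (expf_neq0 2 y0)); rewrite mulfVK ?expf_neq0 // mulNr.
  by apply/eqP; rewrite -addr_eq0 addrC E.
(* Scale so that e^2 has e-coordinate 1; a x^2 + b y^2 = 0 then forces the
   other three coordinates to be -1, -1, 1. *)
exists ((a * x)^-1 *: g), ((- y / (a * x ^+ 2)) *: h); split.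
  apply: natural_basis2Z => //; first by rewrite invr_eq0 mulf_neq0.
  by rewrite mulf_neq0 ?oppr_eq0 ?invr_eq0 ?mulf_neq0 ?expf_neq0.
split; rewrite bmulZl bmulZr ?gg ?hh !scalerA scalerDr !scalerA -scaleNr.
  by congr (_ *: _ + _ *: _); field; rewrite ?a0 ?x0 ?y0.
by congr (_ *: _ + _ *: _); rewrite bE; field; rewrite ?a0 ?x0 ?y0.
Qed.

Section NilpotentSquare.
Variable U : {vspace A}.
Hypotheses (A2_eq_U : is_subspace_set (A2 mul) U) (dimU : \dim U = 1%N)
  (A3_neq0 : exists v, A3 mul v /\ v != 0)
  (A2sq_eq0 : forall v, A2sq mul v -> v = 0).

Lemma natural_basis2_coefs g h : natural_basis2 mul g h ->
  exists a b x y : K, [/\ [&& a != 0, b != 0, x != 0 & y != 0],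
    a * x ^+ 2 + b * y ^+ 2 = 0, x *: g + y *: h != 0,
    mul g g = a *: (x *: g + y *: h) & mul h h = b *: (x *: g + y *: h)].
Proof.
move=> [B [gh hg]]; have [w w0 Uw] := dimv1_line dimU.
have A2_line u : A2 mul u -> exists k, u = k *: w.
  by move/A2_eq_U; rewrite Uw => /vlineP.
have [a gg] := A2_line _ (A2_mul mul g g).
have [b hh] := A2_line _ (A2_mul mul h h).
have [x [y wE]] := basis_pair_decomp w B.
have mulw c d : mul (c *: g + d *: h) w = (c * x * a + d * y * b) *: w.
  by rewrite {1}wE bmul_natural2 // gg hh !scalerA scalerDl.
have E : a * x ^+ 2 + b * y ^+ 2 = 0.
  have : mul w w = 0.
    by apply/A2sq_eq0/A2sq_mul; apply/A2_eq_U; rewrite Uw memv_line.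
  move/eqP; rewrite {1}wE mulw scaler_eq0 (negbTE w0) orbF => /eqP <-; ring.
have N : (x * a != 0) || (y * b != 0).
  rewrite -negb_and; apply/negP => /andP[/eqP xa /eqP yb].
  have [v [A3v]] := A3_neq0; apply/negP/negPn/eqP.
  apply: in_span_eq0 A3v => _ [u [z [/A2_line[k ->] ->]]].
  have [c [d ->]] := basis_pair_decomp u B.
  by rewrite bmulZr mulw -!mulrA xa yb !mulr0 addr0 scale0r scaler0.
by exists a, b, x, y; split; rewrite -?wE //; apply: isotropic_diag2_neq0.
Qed.

Lemma natural_basis2_square g h : natural_basis2 mul g h ->
  pseudo_square mul g h = [set LL; TT; RR; DD].
Proof.
move=> NB; have [a [b [x [y [/and4P[a0 b0 x0 y0] _ _ gg hh]]]]] :=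
  natural_basis2_coefs NB.
apply: (pseudo_square_full (p := a * x) (q := a * y) (r := b * x) (s := b * y)).
- exact: basis_free NB.1.
- by rewrite !mulf_neq0.
- by rewrite gg scalerDr !scalerA.
- by rewrite hh scalerDr !scalerA.
Qed.

Lemma natural_basis2_not_alternative g h : natural_basis2 mul g h -> ~ alternative mul.
Proof.
move=> NB; have [a [b [x [y [/and4P[a0 b0 x0 y0] _ w0 gg hh]]]]] :=
  natural_basis2_coefs NB.
have [_ [gh _]] := NB; apply: (not_alternative_of_sqr_mul gh).
rewrite gg bmulZl bmulDl !bmulZl gh scaler0 add0r hh !scalerA.
by rewrite scaler_eq0 negb_or w0 andbT !mulf_neq0.
Qed.

End NilpotentSquare.

End Bilinear.

Theorem proposition3p10 (K : fieldType) (A : vectType K) (mul : A -> A -> A) :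
  bilinear_mul mul ->
  \dim (fullv : {vspace A}) = 2%N ->
  evolution_algebra2 mul ->
  (exists U : {vspace A}, is_subspace_set (A2 mul) U /\ \dim U = 1%N) ->
  (exists v, A3 mul v /\ v != 0) ->
  (forall v, A2sq mul v -> v = 0) ->
  (exists e f : A, natural_basis2 mul e f /\
     mul e e = e - f /\ mul f f = - e + f) /\
  square_is mul D5 /\
  ~ alternative mul.
Proof.
(* The dimension hypothesis is implied by the existence of a natural basis. *)
move=> mul_bil _ [g [h NB]] [U [A2_eq_U dimU]] A3_neq0 A2sq_eq0.
have coefs := natural_basis2_coefs mul_bil A2_eq_U dimU A3_neq0 A2sq_eq0.
have square := natural_basis2_square mul_bil A2_eq_U dimU A3_neq0 A2sq_eq0.
have [a [b [x [y [nz E _ gg hh]]]]] := coefs g h NB.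
split; first exact: natural_basis2_normalize NB nz E gg hh.
split.
  move=> P; rewrite inE; split => [[e [f [NBef <-]]] | /eqP ->].
    by rewrite square.
  by exists g, h; rewrite square.
exact: natural_basis2_not_alternative NB.
Qed.
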